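(* Let $\mathcal{Z}$ be a data space with unknown distribution $\mu$, let $S=(Z_1,\dots,Z_n)$ have i.i.d. entries $Z_i\sim\mu$, let $\mathcal{W}$ be a hypothesis class, and let the learning algorithm be a Markov kernel $P_{W|S}$ producing a hypothesis $W\in\mathcal{W}$. Write $P_W$ for the marginal of $W$ and $P_{W,Z_i}$ for the joint distribution of $(W,Z_i)$, $i=1,\dots,n$. Let $l:\mathcal{W}\times\mathcal{Z}\to\mathbb{R}^+$ be a loss function. For each $i=1,\dots,n$ let $\widehat{P}_{W,Z_i}$ be an auxiliary joint distribution on $\mathcal{W}\times\mathcal{Z}$, and let $\Lambda_{l(W,Z_i)}(\lambda)=\log \mathbb{E}_{\widehat{P}_{W,Z_i}}\big[e^{\lambda(l(W,Z_i)-\mathbb{E}_{\widehat{P}_{W,Z_i}}[l(W,Z_i)])}\big]$ be the cumulant generating function of $l(W,Z_i)$ under $\widehat{P}_{W,Z_i}$. Assume that for every $i=1,\dots,n$, $\Lambda_{l(W,Z_i)}(\lambda)$ exists, $\Lambda_{l(W,Z_i)}(\lambda)\le\psi_+(\lambda)$ for all $\lambda\in[0,b_+)$ with $0<b_+<+\infty$, and $\Lambda_{l(W,Z_i)}(\lambda)\le\psi_-(-\lambda)$ for all $\lambda\in(b_-,0]$ (with $b_-<0$), where $\psi_+$ and $\psi_-$ are convex functions satisfying $\psi_-(0)=\psi_+(0)=\psi_+'(0)=\psi_-'(0)=0$. Define $\psi_+^{\star-1}(x)=\inf_{\lambda\in(0,b_+)}\frac{x+\psi_+(\lambda)}{\lambda}$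 and $\psi_-^{\star-1}(x)=\inf_{\lambda\in(0,-b_-)}\frac{x+\psi_-(\lambda)}{\lambda}$, and set $A_i=KL(P_W\otimes\mu\,\|\,\widehat{P}_{W,Z_i})$ and $B_i=KL(P_{W,Z_i}\,\|\,\widehat{P}_{W,Z_i})$. Then $$\overline{\text{gen}}(P_{W|S},\mu)\le\frac1n\sum_{i=1}^n\big(\psi_+^{\star-1}(A_i)+\psi_-^{\star-1}(B_i)\big),\qquad -\overline{\text{gen}}(P_{W|S},\mu)\le\frac1n\sum_{i=1}^n\big(\psi_-^{\star-1}(A_i)+\psi_+^{\star-1}(B_i)\big).$$
   Context: Population risk: $L_P(w,\mu)=\int_{\mathcal{Z}} l(w,z)\,\mu(dz)$. Empirical risk: $L_E(w,S)=\frac1n\sum_{i=1}^n l(w,Z_i)$. Expected generalization error: $\overline{\text{gen}}(P_{W|S},\mu)=\mathbb{E}_{P_{W,S}}[L_P(W,\mu)-L_E(W,S)]$. $KL(P\|Q)=\int \log\frac{dP}{dQ}\,dP$ is the Kullback–Leibler divergence (natural logarithm). $P_W\otimes\mu$ denotes the product measure. *)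

From HB Require Import structures.
From mathcomp Require Import all_boot all_order all_algebra.
From mathcomp Require Import all_classical all_reals all_analysis.
Set Implicit Arguments. Unset Strict Implicit. Unset Printing Implicit Defensive.
Import Order.TTheory GRing.Theory Num.Theory.
Import numFieldNormedType.Exports.
Local Open Scope classical_set_scope.
Local Open Scope ring_scope.

Section pairmap.
Context {dO dW dZ : measure_display} {Om : measurableType dO}
  {Wt : measurableType dW} {Zt : measurableType dZ} {n : nat}.
Variables (W : {mfun Om >-> Wt}) (S : {mfun Om >-> n.-tuple Zt}) (i : 'I_n).
Definition WZ_pair (om : Om) : Wt * Zt := (W om, tnth (S om) i).
Lemma WZ_pair_measurable : measurable_fun [set: Om] WZ_pair.
Proof.
apply: measurable_fun_pair => //.
exact: (measurableT_comp (measurable_tnth i)).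
Qed.
HB.instance Definition _ := isMeasurableFun.Build _ _ _ _ WZ_pair
  WZ_pair_measurable.
End pairmap.

Section kl.
Context {d : measure_display} {T : measurableType d} {R : realType}.
Local Open Scope ereal_scope.
Local Open Scope charge_scope.
Definition KL (Pm Qm : probability T R) : \bar R :=
  if pselect (Pm `<< Qm) then
    \int[Pm]_x (ln (fine ('d (charge_of_finite_measure Pm) '/d Qm x)))%:E
  else +oo.
End kl.


Section cgf.
Context {d : measure_display} {T : measurableType d} {R : realType}.
Local Open Scope ereal_scope.
Definition mean (Pm : probability T R) (f : T -> R) : \bar R :=
  \int[Pm]_x (f x)%:E.
Definition cgf_exists (Pm : probability T R) (f : T -> R) (lam : R) : Prop :=
  Pm.-integrable [set: T] (fun x => (f x)%:E) /\
  Pm.-integrable [set: T]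
    (fun x => (expR (lam * (f x - fine (mean Pm f))))%:E).
Definition cgf (Pm : probability T R) (f : T -> R) (lam : R) : R :=
  ln (fine (\int[Pm]_x (expR (lam * (f x - fine (mean Pm f))))%:E)).
End cgf.

Section psi.
Context {R : realType}.
Local Open Scope ereal_scope.
Definition psi_star_inv (psi : R -> R) (b : \bar R) (x : \bar R) : \bar R :=
  ereal_inf [set (x + (psi lam)%:E) * (lam^-1)%:E |
             lam in [set lam : R | (0 < lam)%R /\ lam%:E < b]].
Definition convex_on_0b (psi : R -> R) (b : \bar R) : Prop :=
  forall x y t : R, (0 <= x)%R -> x%:E < b -> (0 <= y)%R -> y%:E < b ->
    (0 <= t <= 1)%R ->
    (psi (t * x + (1 - t) * y) <= t * psi x + (1 - t) * psi y)%R.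
(* psi'(0) = 0 (right derivative at 0, psi being defined on [0, b)) *)
Definition deriv0_zero (psi : R -> R) : Prop :=
  (fun h => (psi h - psi 0) / h)%R @ 0%R^'+ --> 0%R.
End psi.

Section learning.
Context {dO dW dZ : measure_display} {Om : measurableType dO}
  {Wt : measurableType dW} {Zt : measurableType dZ} {R : realType} {n : nat}.
Local Open Scope ereal_scope.
Definition iid_sample (P : probability Om R) (S : Om -> n.-tuple Zt)
    (mu : probability Zt R) : Prop :=
  forall A : 'I_n -> set Zt, (forall i, measurable (A i)) ->
    P [set om | forall i, A i (tnth (S om) i)] = \prod_(i < n) mu (A i).
(* the joint law of (S, W) is P_S (x) P_{W|S}, i.e. K is the learning
   algorithm (Markov kernel) producing W from S *)
Definition algorithm_kernel (P : probability Om R)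
    (S : {mfun Om >-> n.-tuple Zt}) (W : Om -> Wt)
    (K : R.-pker (n.-tuple Zt) ~> Wt) : Prop :=
  forall (A : set (n.-tuple Zt)) (B : set Wt), measurable A -> measurable B ->
    P (S @^-1` A `&` W @^-1` B) = \int[distribution P S]_(s in A) K s B.
Definition pop_risk (mu : probability Zt R) (l : Wt * Zt -> R) (w : Wt) : \bar R :=
  \int[mu]_z (l (w, z))%:E.
Definition emp_risk (l : Wt * Zt -> R) (w : Wt) (s : n.-tuple Zt) : R :=
  ((n%:R)^-1 * \sum_(i < n) l (w, tnth s i))%R.
Definition gen (P : probability Om R) (S : Om -> n.-tuple Zt) (W : Om -> Wt)
    (mu : probability Zt R) (l : Wt * Zt -> R) : \bar R :=
  \int[P]_om (pop_risk mu l (W om) - (emp_risk l (W om) (S om))%:E).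
End learning.

From HB Require Import structures.
From mathcomp Require Import all_boot all_order all_algebra.
From mathcomp Require Import all_classical all_reals all_analysis.
From mathcomp Require Import ring lra measurable_realfun.
Import Order.TTheory GRing.Theory Num.Theory.
Import numFieldNormedType.Exports.
Local Open Scope classical_set_scope.
Local Open Scope ring_scope.

(* Donsker-Varadhan: integrating Young's inequality q (v - ln q + 1) <= e^v
   for the density q = dP/dQ against Q gives
     lambda (E_P l - E_Q l) <= KL(P||Q) + Lambda_Q(lambda).
   Bounding the cgf Lambda_Q by psi and optimising over lambda yields
   E_P l - E_Q l <= psi^{*-1}(KL(P||Q)), and E_Q l - E_P l likewise with -lambda.
   The expected generalization error is the average over i of
   (E_{P_W (x) mu} l - E_{hatP_i} l) + (E_{hatP_i} l - E_{P_{W,Z_i}} l), so both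
   bounds follow by taking P = P_W (x) mu and P = P_{W,Z_i}, with Q = hatP_i. *)

Section real_inequalities.
Context {R : realType}.
Implicit Types q v x : R.

Lemma young_expR_ln v q : 0 <= q -> q * (v - ln q + 1) <= expR v.
Proof.
move=> q0; have [->|qn0] := eqVneq q 0; first by rewrite mul0r expR_ge0.
have qp : 0 < q by rewrite lt_neqAle eq_sym qn0.
have := expR_ge1Dx (v - ln q).
rewrite expRD expRN lnK ?posrE // -(ler_pM2l qp) mulrCA divff ?mulr1 //.
by rewrite addrC.
Qed.

Lemma mul_max_oppln_le1 q : 0 <= q -> q * Num.max (- ln q) 0 <= 1.
Proof.
move=> q0; have [q1|q1] := leP 1 q.
  by rewrite (max_idPr _) ?mulr0 // oppr_le0 ln_ge0.
have [->|qn0] := eqVneq q 0; first by rewrite mul0r.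
have qp : 0 < q by rewrite lt_neqAle eq_sym qn0.
have lnq : - ln q <= q^-1 - 1.
  have := @le_ln1Dx _ (q^-1 - 1); rewrite addrCA subrr addr0 lnV ?posrE //.
  by apply; rewrite ltrBrDl subrr invr_gt0.
rewrite (max_idPl _); last by rewrite oppr_ge0 ln_le0 // ltW.
apply: le_trans (_ : q * (q^-1 - 1) <= 1); first by rewrite ler_pM2l.
by rewrite mulrBr divff // mulr1 lerBlDr lerDl ltW.
Qed.

Lemma max0_ge0 x : 0 <= Num.max x 0.
Proof. by rewrite le_max lexx orbT. Qed.

Lemma max0_subN x : Num.max x 0 - Num.max (- x) 0 = x.
Proof. by have [x0|x0] := leP 0 x; have [y0|y0] := leP 0 (- x); lra. Qed.

(* Young's inequality rearranged into nonnegative terms, so that it can be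
   integrated against P without any integrability assumption. *)
Lemma young_expR_posneg (a u m c q : R) : let C := - (a * m) - ln c + 1 in
  0 < c -> 0 <= q ->
  (Num.max a 0 * u + Num.max (- ln q) 0 + Num.max C 0) * q <=
  (Num.max (- a) 0 * u + Num.max (ln q) 0 + Num.max (- C) 0) * q +
    expR (a * (u - m)) / c.
Proof.
move=> C c0 q0; set F1 := (_ + _ + _); set F2 := (_ + _ + _).
have := young_expR_ln (a * (u - m) - ln c) q q0.
rewrite expRD expRN lnK ?posrE //.
have -> : a * (u - m) - ln c - ln q + 1 = F1 - F2.
  have := max0_subN a; have := max0_subN C; have := max0_subN (ln q).
  rewrite /F1 /F2 /C; nra.
by rewrite (_ : F1 * q = F2 * q + q * (F1 - F2)) ?lerD2l //; ring.
Qed.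

End real_inequalities.

Section psi_star_inv.
Context {R : realType}.
Local Open Scope ereal_scope.
Implicit Types (psi : R -> R) (b x z : \bar R).

Lemma le_psi_star_inv psi b x z :
  (forall lam : R, (0 < lam)%R -> lam%:E < b -> lam%:E * z <= x + (psi lam)%:E) ->
  z <= psi_star_inv psi b x.
Proof.
move=> H; apply/ereal_infP => _ [lam [lam0 lamb] <-].
by rewrite lee_pdivlMr // muleC; exact: H.
Qed.

Lemma psi_star_inv_pinfty psi b : psi_star_inv psi b +oo = +oo.
Proof.
apply/eqP; rewrite eq_le leey /=; apply/ereal_infP => _ [lam [lam0 _] <-].
by rewrite gt0_mulye // lte_fin invr_gt0.
Qed.

End psi_star_inv.

Section averages.
Context {R : realType} {n : nat}.
Local Open Scope ereal_scope.
Local Notation avg f := ((n%:R^-1)%:E * \sum_(i < n) f i).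

Lemma avg_pinfty (f : 'I_n -> \bar R) (j : 'I_n) :
  (forall i, -oo < f i) -> f j = +oo -> avg f = +oo.
Proof.
move=> fNy fj.
have n0 : (0 < n)%N by case: j {fj} => k /(leq_ltn_trans (leq0n k)).
have -> : \sum_(i < n) f i = +oo.
  apply/eqP; rewrite esum_eqy; last by move=> i _; rewrite gt_eqF.
  by apply/existsP; exists j; rewrite fj.
by rewrite gt0_muley // lte_fin invr_gt0 ltr0n.
Qed.

Lemma avg_cst (x : \bar R) : (0 < n)%N -> x \is a fin_num -> avg (fun=> x) = x.
Proof.
move=> n0 /fineK <-; rewrite sumEFin sumr_const card_ord -EFinM.
by rewrite -[(fine x *+ n)%R]mulr_natr mulrCA mulVf ?mulr1 // pnatr_eq0 -lt0n.
Qed.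

Lemma le_avg_gap (u v : 'I_n -> \bar R) (m : 'I_n -> R) (x : \bar R)
    (X Y : 'I_n -> \bar R) :
  (forall i, 0 <= u i) -> (forall i, 0 <= v i) ->
  (forall i, u i - (m i)%:E <= X i) -> (forall i, (m i)%:E - v i <= Y i) ->
  (forall i, v i = +oo -> Y i = +oo) ->
  ((forall i, u i \is a fin_num /\ v i \is a fin_num) -> x = avg u - avg v) ->
  x <= avg (fun i => X i + Y i).
Proof.
move=> u0 v0 uX vY vY_oo xE.
have XNy i : -oo < X i.
  by apply: lt_le_trans (uX i); case: (u i) (u0 i) => // r _; rewrite ltNyr.
have YNy i : -oo < Y i.
  case vi : (v i) (v0 i) (vY i) => [r| |] // _; last by rewrite vY_oo.
  by apply: lt_le_trans; rewrite ltNyr.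
have [fin|/existsNP[j /not_andP uv_oo]] :=
  pselect (forall i, u i \is a fin_num /\ v i \is a fin_num); last first.
  rewrite (@avg_pinfty _ j) ?leey // => [i|].
    by rewrite ltNye adde_eq_ninfty negb_or -!ltNye XNy YNy.
  have [uj|vj] : u j = +oo \/ v j = +oo.
    case: uv_oo => /negP; rewrite ge0_fin_numE ?u0 ?v0 // ltey negbK => /eqP.
    - by left.
    - by right.
  - by move: (uX j); rewrite uj leye_eq => /eqP ->; case: (Y j) (YNy j).
  - by rewrite vY_oo // addey // gt_eqF.
pose ur i := fine (u i); pose vr i := fine (v i).
have uE i : u i = (ur i)%:E by rewrite fineK //; case: (fin i).
have vE i : v i = (vr i)%:E by rewrite fineK //; case: (fin i).
have gapE : (n%:R^-1 * \sum_(i < n) ur i - n%:R^-1 * \sum_(i < n) vr i =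
    n%:R^-1 * \sum_(i < n) ((ur i - m i) + (m i - vr i)))%R.
  by rewrite -mulrBr -sumrB; apply: congr1; apply: eq_bigr => i _; ring.
rewrite xE // (eq_bigr _ (fun i _ => uE i)) (eq_bigr _ (fun i _ => vE i)).
rewrite !sumEFin -!EFinM -EFinB gapE EFinM -sumEFin.
apply: lee_wpmul2l; first by rewrite lee_fin invr_ge0.
apply: lee_sum => i _; rewrite EFinD !EFinB -uE -vE.
exact: leeD.
Qed.

End averages.

Section integrals.
Context {d : measure_display} {T : measurableType d} {R : realType}.
Variable P : probability T R.
Local Open Scope ereal_scope.

Lemma integral_cst_probability (r : R) : \int[P]_x r%:E = r%:E.
Proof.
by rewrite -[fun _ => _]/(cst r%:E) integral_cst //= probability_setT mule1.
Qed.

Lemma ge0_integral_scale_add_cst (k c : R) (f g : T -> R) :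
  (0 <= k)%R -> (0 <= c)%R -> (forall x, 0 <= f x)%R -> (forall x, 0 <= g x)%R ->
  measurable_fun setT f -> measurable_fun setT g ->
  \int[P]_x (k * f x + g x + c)%:E =
  k%:E * \int[P]_x (f x)%:E + \int[P]_x (g x)%:E + c%:E.
Proof.
move=> k0 c0 f0 g0 mf mg.
have mEf : measurable_fun setT (fun x => (f x)%:E) by exact/measurable_EFinP.
have mEg : measurable_fun setT (fun x => (g x)%:E) by exact/measurable_EFinP.
have mEkf : measurable_fun setT (fun x => (k * f x)%:E).
  by apply/measurable_EFinP; exact: measurable_funM.
under eq_integral do rewrite !EFinD.
rewrite ge0_integralD //=; try by [apply: emeasurable_funD |
  move=> x _; rewrite adde_ge0 // lee_fin ?mulr_ge0].
rewrite ge0_integralD //; try by move=> x _; rewrite lee_fin ?mulr_ge0.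
rewrite integral_cst_probability.
under eq_integral do rewrite EFinM.
by rewrite ge0_integralZl_EFin // => x _; rewrite lee_fin.
Qed.

Lemma fin_num_ge0_integrable (mu : {measure set T -> \bar R}) (f : T -> \bar R) :
  measurable_fun setT f ->
  (forall x, 0 <= f x) -> \int[mu]_x f x \is a fin_num -> mu.-integrable setT f.
Proof.
move=> mf f0 ffin; apply/integrableP; split => //.
under eq_integral do rewrite gee0_abs //.
by rewrite -ge0_fin_numE // integral_ge0.
Qed.

End integrals.

Section expR_centered.
Context {d : measure_display} {T : measurableType d} {R : realType}.
Local Open Scope ereal_scope.

Lemma ge1_integral_expR_centered (Q : probability T R) (l : T -> R) (a : R) :
  cgf_exists Q l a ->
  (1 <= fine (\int[Q]_x (expR (a * (l x - fine (mean Q l))))%:E))%R.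
Proof.
move=> [il iexp]; set m := fine (mean Q l).
have mE : mean Q l = m%:E by rewrite fineK // integrable_fin_num.
have icst r : Q.-integrable setT (fun=> r%:E).
  exact: finite_measure_integrable_cst.
have ilm : Q.-integrable setT (fun x => (l x - m)%:E).
  by under eq_fun do rewrite EFinB; exact: integrableB.
have ialm : Q.-integrable setT (fun x => (a * (l x - m))%:E).
  by under eq_fun do rewrite EFinM; exact: (integrableZl measurableT).
have ilin : Q.-integrable setT (fun x => (1 + a * (l x - m))%:E).
  by under eq_fun do rewrite EFinD; exact: integrableD.
have lin1 : \int[Q]_x (1 + a * (l x - m))%:E = 1.
  rewrite integralD_EFin //; last exact: icst.
  rewrite /comp integral_cst_probability.
  under eq_integral do rewrite EFinM.
  rewrite integralZl //.
  under eq_integral do rewrite EFinB.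
  rewrite integralB_EFin //; last exact: icst.
  rewrite /comp integral_cst_probability -/(mean Q l) mE.
  by rewrite subee // mule0 adde0.
rewrite -lee_fin fineK ?integrable_fin_num // -lin1.
by apply: le_integral => // x _; rewrite lee_fin expR_ge1Dx.
Qed.

End expR_centered.

Section ereal_rearrange.
Context {R : realType}.
Local Open Scope ereal_scope.

(* The integrated form of young_expR_posneg solved for a (L - m), where
   L = E_P l and Pp = E_P (ln q)^+ may be infinite. *)
Lemma le_mulB_of_le_posneg (a m z : R) (L Pp N : \bar R) :
  0 <= L -> 0 <= Pp -> N \is a fin_num ->
  let C := (- (a * m) - z + 1)%R in
  (Num.max a 0)%:E * L + N + (Num.max C 0)%:E <=
    (Num.max (- a) 0)%:E * L + Pp + (Num.max (- C) 0)%:E + 1 ->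
  a%:E * (L - m%:E) <= Pp - N + z%:E.
Proof.
case: N => // N L0 Pp0 _ C.
case: Pp Pp0 => [Pp _| |] //; last first.
  by move=> _ _; rewrite (_ : +oo - _ + _ = +oo) ?leey.
have eC := max0_subN C; have ea := max0_subN a.
case: L L0 => [L| |] // _ H.
  rewrite -!EFinM -!EFinD lee_fin in H.
  rewrite -EFinB -EFinB -EFinM -EFinD lee_fin.
  have eaL : (Num.max a 0 * L - Num.max (- a) 0 * L = a * L)%R.
    by rewrite -mulrBl ea.
  rewrite /C in eC; lra.
have [a0|a0|a0] := ltgtP a 0%R.
- by rewrite (_ : +oo - m%:E = +oo) // lt0_muley ?lte_fin ?leNye.
- have na0 : (- a <= 0)%R by rewrite oppr_le0 ltW.
  by move: H; rewrite (max_idPr na0) mul0e gt0_muley // lte_fin lt_max a0.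
- move: H eC; rewrite /C a0 oppr0 maxxx !mul0e !add0e mul0r oppr0 add0r.
  move=> H eC; rewrite -!EFinD lee_fin in H.
  rewrite -EFinB -EFinD lee_fin; lra.
Qed.

End ereal_rearrange.

Section density.
Context {d : measure_display} {T : measurableType d} {R : realType}.
Variables (P Q : probability T R).
Hypothesis PQ : P `<< Q.
Local Open Scope ereal_scope.

(* A version of dP/dQ that is nonnegative everywhere; it agrees a.e. with the
   Radon-Nikodym derivative in the definition of KL. *)
Let dens x := fine (Radon_Nikodym_SigmaFinite.f P Q x).

Let densE x : Radon_Nikodym_SigmaFinite.f P Q x = (dens x)%:E.
Proof. by rewrite fineK // Radon_Nikodym_SigmaFinite.f_fin_num. Qed.

Let dens_ge0 x : (0 <= dens x)%R.
Proof. by rewrite -lee_fin -densE Radon_Nikodym_SigmaFinite.f_ge0. Qed.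

Let measurable_dens : measurable_fun setT dens.
Proof.
apply: measurableT_comp (fine_measurable measurableT) _.
exact: measurable_int (Radon_Nikodym_SigmaFinite.f_integrable PQ).
Qed.

Let measurable_ln_dens : measurable_fun setT (fun x => ln (dens x)).
Proof. exact: measurableT_comp (@measurable_ln R) _. Qed.

Lemma integral_dens (h : T -> \bar R) : (forall x, 0 <= h x) ->
  measurable_fun setT h -> \int[Q]_x (h x * (dens x)%:E) = \int[P]_x h x.
Proof.
move=> h0 mh.
rewrite -(Radon_Nikodym_SigmaFinite.change_of_variables PQ h0 measurableT mh).
by apply: eq_integral => x _; rewrite densE.
Qed.

Lemma KL_dens : KL P Q = \int[P]_x (ln (dens x))%:E.
Proof.
rewrite /KL; case: pselect => [?|//]; apply: ae_eq_integral => //.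
- apply/measurable_EFinP; apply: measurableT_comp (@measurable_ln R) _.
  exact: measurableT_comp (fine_measurable measurableT) _.
- exact/measurable_EFinP.
- have := ae_eq_Radon_Nikodym_SigmaFinite PQ measurableT.
  move=> /(null_dominates_ae_eq measurableT PQ).
  by apply: filterS => x /[apply] <-.
Qed.

Lemma KL_dens_posneg : KL P Q =
  \int[P]_x (Num.max (ln (dens x)) 0)%:E -
  \int[P]_x (Num.max (- ln (dens x)) 0)%:E.
Proof.
rewrite KL_dens integralE; congr (_ - _); apply: eq_integral => x _.
  by rewrite funeposE EFin_max.
by rewrite funenegE EFin_max EFinN.
Qed.

Lemma le_integral_dens (g h k : T -> R) :
  (forall x, 0 <= g x)%R -> (forall x, 0 <= h x)%R -> (forall x, 0 <= k x)%R ->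
  measurable_fun setT g -> measurable_fun setT h -> measurable_fun setT k ->
  (forall x, g x * dens x <= h x * dens x + k x)%R ->
  \int[P]_x (g x)%:E <= \int[P]_x (h x)%:E + \int[Q]_x (k x)%:E.
Proof.
move=> g0 h0 k0 mg mh mk ghk.
have mEM (f : T -> R) : measurable_fun setT f ->
    measurable_fun setT (fun x => (f x)%:E * (dens x)%:E).
  move=> mf; under eq_fun do rewrite -EFinM.
  exact/measurable_EFinP/measurable_funM.
rewrite -!integral_dens //;
  try by [exact/measurable_EFinP | move=> x; rewrite lee_fin].
rewrite -ge0_integralD //; try by [exact/measurable_EFinP | exact: mEM |
  move=> x _; rewrite -?EFinM lee_fin ?mulr_ge0].
apply: ge0_le_integral => //.
- by move=> x _; rewrite -EFinM lee_fin mulr_ge0.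
- exact: mEM.
- by apply: emeasurable_funD; [exact: mEM | exact/measurable_EFinP].
- by move=> x _; rewrite -!EFinM -EFinD lee_fin.
Qed.

Lemma integral_max_oppln_dens_le1 :
  \int[P]_x (Num.max (- ln (dens x)) 0)%:E <= 1.
Proof.
have mnl : measurable_fun setT (fun x => Num.max (- ln (dens x)) 0)%R.
  by apply: measurable_maxr => //; exact: measurableT_comp.
rewrite -integral_dens; last 2 first.
- by move=> x; rewrite lee_fin max0_ge0.
- exact/measurable_EFinP.
rewrite -(integral_cst_probability Q 1); apply: ge0_le_integral => //.
- by move=> x _; rewrite -EFinM lee_fin mulr_ge0 ?max0_ge0.
- by under eq_fun do rewrite -EFinM; exact/measurable_EFinP/measurable_funM.
- by move=> x _; rewrite -EFinM lee_fin mulrC mul_max_oppln_le1.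
Qed.

Lemma dominated_donsker_varadhan (l : T -> R) (a : R) :
  measurable_fun setT l -> (forall x, 0 <= l x)%R -> cgf_exists Q l a ->
  a%:E * (\int[P]_x (l x)%:E - (fine (mean Q l))%:E) <= KL P Q + (cgf Q l a)%:E.
Proof.
move=> ml l0 cgfQ; rewrite /cgf KL_dens_posneg.
set m := fine (mean Q l); set c := fine (\int[Q]_x _).
have c1 : (1 <= c)%R by exact: ge1_integral_expR_centered.
have c0 : (0 < c)%R := lt_le_trans ltr01 c1.
pose C := (- (a * m) - ln c + 1)%R.
pose F1 x :=
  (Num.max a 0 * l x + Num.max (- ln (dens x)) 0 + Num.max C 0)%R.
pose F2 x :=
  (Num.max (- a) 0 * l x + Num.max (ln (dens x)) 0 + Num.max (- C) 0)%R.
pose G x := (expR (a * (l x - m)) / c)%R.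
have mlnp : measurable_fun setT (fun x => Num.max (ln (dens x)) 0)%R.
  exact: measurable_maxr.
have mlnn : measurable_fun setT (fun x => Num.max (- ln (dens x)) 0)%R.
  by apply: measurable_maxr => //; exact: measurableT_comp.
have intG : \int[Q]_x (G x)%:E = 1.
  have [_ iexp] := cgfQ.
  under eq_integral do rewrite EFinM.
  rewrite integralZr // -[X in X * _]fineK ?integrable_fin_num // -/c.
  by rewrite -EFinM divff // gt_eqF.
have intF : \int[P]_x (F1 x)%:E <= \int[P]_x (F2 x)%:E + 1.
  rewrite -intG; apply: le_integral_dens => //.
  - by move=> x; rewrite !addr_ge0 ?mulr_ge0 ?max0_ge0.
  - by move=> x; rewrite !addr_ge0 ?mulr_ge0 ?max0_ge0.
  - by move=> x; rewrite divr_ge0 ?expR_ge0 ?ltW.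
  - by do 2 apply: measurable_funD => //; exact: measurable_funM.
  - by do 2 apply: measurable_funD => //; exact: measurable_funM.
  - apply: measurable_funM => //; apply: measurableT_comp (@measurable_expR R) _.
    by apply: measurable_funM => //; exact: measurable_funB.
  - by move=> x; exact: young_expR_posneg.
rewrite /F1 /F2 !ge0_integral_scale_add_cst // in intF;
  try by [exact: max0_ge0 | move=> x; exact: max0_ge0].
have N_fin : \int[P]_x (Num.max (- ln (dens x)) 0)%:E \is a fin_num.
  rewrite ge0_fin_numE; last first.
    by apply: integral_ge0 => x _; rewrite lee_fin max0_ge0.
  exact: le_lt_trans integral_max_oppln_dens_le1 (ltey _).
apply: le_mulB_of_le_posneg => //; apply: integral_ge0 => x _.
  by rewrite lee_fin.
by rewrite lee_fin max0_ge0.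
Qed.

End density.

Section donsker_varadhan.
Context {d : measure_display} {T : measurableType d} {R : realType}.
Variables (P Q : probability T R) (l : T -> R).
Hypotheses (ml : measurable_fun setT l) (l0 : forall x, (0 <= l x)%R).
Local Open Scope ereal_scope.

Lemma donsker_varadhan (a : R) : cgf_exists Q l a ->
  a%:E * (\int[P]_x (l x)%:E - (fine (mean Q l))%:E) <= KL P Q + (cgf Q l a)%:E.
Proof.
have [PQ|nPQ] := pselect (P `<< Q); first exact: dominated_donsker_varadhan.
have -> : KL P Q = +oo by rewrite /KL; case: pselect.
by rewrite addye ?leey.
Qed.

Lemma KL_pinfty (a : R) : (0 < a)%R -> cgf_exists Q l a ->
  \int[P]_x (l x)%:E = +oo -> KL P Q = +oo.
Proof.
move=> a0 /(donsker_varadhan a) + Loo; rewrite Loo (_ : +oo - _ = +oo) //.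
by rewrite gt0_muley ?lte_fin // leye_eq; case: (KL P Q).
Qed.

Lemma mean_gap_le_psi_star_inv (psi : R -> R) (b : \bar R) :
  (forall lam : R, (0 < lam)%R -> lam%:E < b ->
     cgf_exists Q l lam /\ (cgf Q l lam <= psi lam)%R) ->
  \int[P]_x (l x)%:E - (fine (mean Q l))%:E <= psi_star_inv psi b (KL P Q).
Proof.
move=> cgf_psi; apply: le_psi_star_inv => lam lam0 lamb.
have [cgfQ cgf_le] := cgf_psi lam lam0 lamb.
by apply: le_trans (donsker_varadhan _ cgfQ) _; apply: leeD; rewrite ?lee_fin.
Qed.

Lemma mean_gapN_le_psi_star_inv (psi : R -> R) (b : \bar R) :
  (forall lam : R, (0 < lam)%R -> lam%:E < b ->
     cgf_exists Q l (- lam) /\ (cgf Q l (- lam) <= psi lam)%R) ->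
  (fine (mean Q l))%:E - \int[P]_x (l x)%:E <= psi_star_inv psi b (KL P Q).
Proof.
move=> cgf_psi; apply: le_psi_star_inv => lam lam0 lamb.
have [cgfQ cgf_le] := cgf_psi lam lam0 lamb.
have := donsker_varadhan _ cgfQ.
rewrite EFinN mulNe -muleN oppeB ?fin_num_adde_defl //.
by rewrite addeC => /le_trans; apply; apply: leeD; rewrite ?lee_fin.
Qed.

End donsker_varadhan.

Section averaged_mean_gap.
Context {d : measure_display} {T : measurableType d} {R : realType} {n : nat}.
Variables (P0 : probability T R) (P Q : 'I_n -> probability T R) (l : T -> R).
Hypotheses (ml : measurable_fun setT l) (l0 : forall x, (0 <= l x)%R).
Variables (psip psim : R -> R) (bp : R) (bm : \bar R).
Local Open Scope ereal_scope.
Hypothesis bp0 : (0 < bp)%R.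
Hypothesis cgf_psip : forall i (lam : R), (0 < lam)%R -> lam%:E < bp%:E ->
  cgf_exists (Q i) l lam /\ (cgf (Q i) l lam <= psip lam)%R.
Hypothesis cgf_psim : forall i (lam : R), (0 < lam)%R -> lam%:E < bm ->
  cgf_exists (Q i) l (- lam) /\ (cgf (Q i) l (- lam) <= psim lam)%R.
Local Notation avg f := ((n%:R^-1)%:E * \sum_(i < n) f i).
Local Notation L0 := (\int[P0]_x (l x)%:E).

Lemma avg_mean_gap_le_psi_star_inv (x : \bar R) : (0 < n)%N ->
  (L0 \is a fin_num -> (forall i, \int[P i]_x (l x)%:E \is a fin_num) ->
    x = L0 - avg (fun i => \int[P i]_x (l x)%:E)) ->
  x <= avg (fun i => psi_star_inv psip bp%:E (KL P0 (Q i)) +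
                     psi_star_inv psim bm (KL (P i) (Q i))) /\
  - x <= avg (fun i => psi_star_inv psim bm (KL P0 (Q i)) +
                       psi_star_inv psip bp%:E (KL (P i) (Q i))).
Proof.
move=> n0 xE.
pose L i := \int[P i]_x (l x)%:E; pose m i := fine (mean (Q i) l).
have bp2 : (0 < bp / 2)%R by rewrite divr_gt0.
have bp2_lt : (bp / 2)%:E < bp%:E.
  by rewrite lte_fin ltr_pdivrMr // ltr_pMr // ltr1n.
have L0_oo i : L0 = +oo -> KL P0 (Q i) = +oo.
  exact: (KL_pinfty _ _ _ ml l0 _ bp2 (cgf_psip i _ bp2 bp2_lt).1).
have L_oo i : L i = +oo -> KL (P i) (Q i) = +oo.
  exact: (KL_pinfty _ _ _ ml l0 _ bp2 (cgf_psip i _ bp2 bp2_lt).1).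
have L0_ge0 : 0 <= L0 by apply: integral_ge0 => z _; rewrite lee_fin.
have L_ge0 i : 0 <= L i by apply: integral_ge0 => z _; rewrite lee_fin.
split.
- apply: (le_avg_gap (fun=> L0) L m) => //.
  + by move=> i; exact: mean_gap_le_psi_star_inv (cgf_psip i).
  + by move=> i; exact: mean_gapN_le_psi_star_inv (cgf_psim i).
  + by move=> i /L_oo ->; rewrite psi_star_inv_pinfty.
  + move=> fin; have [L0_fin _] := fin (Ordinal n0).
    by rewrite avg_cst // xE // => i; have [] := fin i.
- under eq_bigr do rewrite addrC.
  apply: (le_avg_gap L (fun=> L0) m) => //.
  + by move=> i; exact: mean_gap_le_psi_star_inv (cgf_psip i).
  + by move=> i; exact: mean_gapN_le_psi_star_inv (cgf_psim i).
  + by move=> i /L0_oo ->; rewrite psi_star_inv_pinfty.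
  + move=> fin; have [_ L0_fin] := fin (Ordinal n0).
    rewrite avg_cst // xE // => [|i]; last by have [] := fin i.
    by rewrite oppeB ?fin_num_adde_defr //; rewrite addeC.
Qed.

End averaged_mean_gap.

Section risks.
Context {dO dW dZ : measure_display} {Om : measurableType dO}
  {Wt : measurableType dW} {Zt : measurableType dZ} {R : realType} {n : nat}.
Variables (P : probability Om R) (mu : probability Zt R).
Variables (W : {mfun Om >-> Wt}) (S : {mfun Om >-> n.-tuple Zt}).
Variable l : Wt * Zt -> R.
Hypotheses (ml : measurable_fun setT l) (l0 : forall p, (0 <= l p)%R).
Local Open Scope ereal_scope.

Let measurable_loss : measurable_fun setT (fun z => (l z)%:E).
Proof. exact/measurable_EFinP. Qed.

Let loss_ge0 z : 0 <= (l z)%:E. Proof. by rewrite lee_fin. Qed.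

Lemma integral_pop_risk :
  \int[P]_om pop_risk mu l (W om) = \int[distribution P W \x mu]_z (l z)%:E.
Proof.
rewrite fubini_tonelli1 // ge0_integral_distribution //.
- exact: measurable_fun_fubini_tonelli_F.
- by move=> w; apply: integral_ge0.
Qed.

Lemma integral_loss_tnth i :
  \int[P]_om (l (W om, tnth (S om) i))%:E =
  \int[distribution P (WZ_pair W S i)]_z (l z)%:E.
Proof. by rewrite ge0_integral_distribution. Qed.

Lemma integral_emp_risk :
  \int[P]_om (emp_risk l (W om) (S om))%:E =
  (n%:R^-1)%:E * \sum_(i < n) \int[P]_om (l (W om, tnth (S om) i))%:E.
Proof.
have mli i : measurable_fun setT (fun om => (l (W om, tnth (S om) i))%:E).
  exact/measurable_EFinP/(measurableT_comp ml (WZ_pair_measurable W S i)).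
under eq_integral do rewrite /emp_risk EFinM -sumEFin.
rewrite ge0_integralZl ?lee_fin ?invr_ge0 //; last 2 first.
- exact: emeasurable_sum.
- by move=> om _; apply: sume_ge0.
by rewrite ge0_integral_sum.
Qed.

Lemma genE :
  \int[distribution P W \x mu]_z (l z)%:E \is a fin_num ->
  (forall i, \int[distribution P (WZ_pair W S i)]_z (l z)%:E \is a fin_num) ->
  gen P S W mu l = \int[distribution P W \x mu]_z (l z)%:E -
    (n%:R^-1)%:E * \sum_(i < n) \int[distribution P (WZ_pair W S i)]_z (l z)%:E.
Proof.
rewrite -integral_pop_risk => pop_fin loss_fin.
under eq_bigr do rewrite -integral_loss_tnth.
rewrite -integral_emp_risk /gen integralB //; apply: fin_num_ge0_integrable => //.
- have mF : measurable_fun setT (fubini_F mu (fun z => (l z)%:E)).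
    exact: measurable_fun_fubini_tonelli_F.
  exact: measurableT_comp mF (measurable_funPT W).
- by move=> om; apply: integral_ge0.
- apply/measurable_EFinP/measurable_funM => //.
  apply: measurable_sum => i.
  exact: measurableT_comp ml (WZ_pair_measurable W S i).
- by move=> om; rewrite lee_fin mulr_ge0 ?invr_ge0 ?sumr_ge0.
- rewrite integral_emp_risk fin_numM // sum_fin_num all_map.
  by apply/allP => i _ /=; rewrite integral_loss_tnth.
Qed.

End risks.

Theorem theorem1 (R : realType) (dO dW dZ : measure_display)
  (Om : measurableType dO) (Wt : measurableType dW) (Zt : measurableType dZ)
  (n : nat) (P : probability Om R) (mu : probability Zt R)
  (S : {mfun Om >-> n.-tuple Zt}) (W : {mfun Om >-> Wt})
  (K : R.-pker (n.-tuple Zt) ~> Wt) (l : Wt * Zt -> R)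
  (hatP : 'I_n -> probability (Wt * Zt)%type R)
  (psip psim : R -> R) (bp : R) (bm : \bar R) :
  (0 < n)%N ->
  iid_sample P S mu ->
  algorithm_kernel P S W K ->
  measurable_fun [set: Wt * Zt] l -> (forall p, 0 <= l p) ->
  0 < bp -> (bm < 0)%E ->
  (forall i lam, 0 <= lam < bp ->
     cgf_exists (hatP i) l lam /\ cgf (hatP i) l lam <= psip lam) ->
  (forall i lam, (bm < lam%:E)%E -> lam <= 0 ->
     cgf_exists (hatP i) l lam /\ cgf (hatP i) l lam <= psim (- lam)) ->
  convex_on_0b psip bp%:E -> convex_on_0b psim (- bm)%E ->
  psim 0 = 0 -> psip 0 = 0 -> deriv0_zero psip -> deriv0_zero psim ->
  let A i := KL (distribution P W \x mu)%E (hatP i) in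
  let B i := KL (distribution P (WZ_pair W S i)) (hatP i) in
  (gen P S W mu l <= (n%:R^-1)%:E *
     \sum_(i < n) (psi_star_inv psip bp%:E (A i) + psi_star_inv psim (- bm) (B i)))%E /\
  (- gen P S W mu l <= (n%:R^-1)%:E *
     \sum_(i < n) (psi_star_inv psim (- bm) (A i) + psi_star_inv psip bp%:E (B i)))%E.
Proof.
(* Only the cgf bounds matter: the population risk is already taken under
   P_W (x) mu, and psi^{*-1} is bounded one lambda at a time. *)
move=> n0 _ _ ml l0 bp0 _ hp hm _ _ _ _ _ _ A B.
apply: avg_mean_gap_le_psi_star_inv => //.
- exact: ml.
- by move=> i lam lam0; rewrite lte_fin => lambp; apply: hp; rewrite ltW.
- move=> i lam lam0 lambm; rewrite -[in psim _](opprK lam).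
  by apply: hm; rewrite ?oppr_le0 ?ltW // EFinN lteNr.
- exact: genE.
Qed.
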